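(* Let $V\subseteq\mathcal V$ be finite and let $\mathcal E,\mathcal F\in \mathit{DProg}(V)$. Then: (1) $\mathcal E\le_T^e\mathcal F$ if and only if $\mathcal E\sqsubseteq\mathcal F$; (2) $\mathcal E\le_P^e\mathcal F$ if and only if $\mathcal F\sqsubseteq\mathcal E$; (3) $\mathcal E\equiv_T^e\mathcal F$ iff $\mathcal E\equiv_P^e\mathcal F$ iff $\mathcal E=\mathcal F$; (4) if both $\mathcal E$ and $\mathcal F$ are trace-preserving, then $\mathcal E\le_T^e\mathcal F$ iff $\mathcal E\le_P^e\mathcal F$ iff $\mathcal E=\mathcal F$.
   Context: $\mathcal V$ is a countably infinite set of quantum variables, each $q\in\mathcal V$ with state space $\mathcal H_q=\mathbb C^2$; for finite $V\subseteq\mathcal V$, $\mathcal H_V=\bigotimes_{q\in V}\mathcal H_q$ with identity $I_V$. $\mathcal D(\mathcal H)$ denotes partial density operators (positive operators of trace $\le 1$), $\mathcal P(\mathcal H)$ effects (positive operators with eigenvalues in $[0,1]$), and $\sqsubseteq$ the Löwner order on operators ($A\sqsubseteq B$ iff $B-A$ is positive). $\mathit{DProg}(V)$ is the set of completely positive trace-nonincreasing (CPTN) super-operators on $\mathcal L(\mathcal H_V)$; for $\mathcal E,\mathcal F\in\mathit{DProg}(V)$, $\mathcal E\sqsubseteq\mathcal F$ means that $\mathcal F-\mathcal E$ is completely positive. Convention: operators and super-operators on a subsystem are implicitly extended to a larger system by tensoring with the identity operator / identity super-operator. Correctness: for finite $W\subseteq\mathcal V$ and $M,N\in\mathcal P(\mathcal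 H_W)$, $\mathcal E\models_{tot}(M,N)$ means that for every finite $X\supseteq V\cup W$ and every $\rho\in\mathcal D(\mathcal H_X)$, ${\rm tr}(M\rho)\le{\rm tr}(N\mathcal E(\rho))$; $\mathcal E\models_{par}(M,N)$ means that for all such $X,\rho$, ${\rm tr}(M\rho)\le{\rm tr}(N\mathcal E(\rho))+{\rm tr}(\rho)-{\rm tr}(\mathcal E(\rho))$. Refinement: $\mathcal E\le_T^e\mathcal F$ iff for every finite $W\subseteq\mathcal V$ and all $M,N\in\mathcal P(\mathcal H_W)$, $\mathcal E\models_{tot}(M,N)$ implies $\mathcal F\models_{tot}(M,N)$; $\mathcal E\le_P^e\mathcal F$ is defined the same way with $\models_{par}$. $\mathcal E\equiv_T^e\mathcal F$ means $\mathcal E\le_T^e\mathcal F$ and $\mathcal F\le_T^e\mathcal E$; similarly $\equiv_P^e$. *)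

(* complex numbers R[i] over an abstract real field R : realType,
   quantum variables = natural numbers, finite sets of variables = {fset nat}. *)
From HB Require Import structures.
From mathcomp Require Import all_boot all_order all_algebra.
From mathcomp Require Import finmap.
From mathcomp Require Import complex.
From mathcomp Require Import reals.

Set Implicit Arguments.
Unset Strict Implicit.
Unset Printing Implicit Defensive.

Import Order.TTheory GRing.Theory Num.Theory.
Local Open Scope ring_scope.

(* Computational basis of H_X = (C^2)^{(x) X}: assignments X -> bool. *)
Definition basis (X : {fset nat}) : finType := {ffun X -> bool}.

Section Quantum.
Variable R : realType.
Local Notation C := (R[i]).

(* Linear operators on H_X, as matrices indexed by the computational basis. *)
Definition Op (X : {fset nat}) := basis X -> basis X -> C.

Definition SO (V : {fset nat}) := Op V -> Op V.

Definition op_tr X (A : Op X) : C := \sum_(a : basis X) A a a.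
Definition op_mul X (A B : Op X) : Op X := fun a b => \sum_(c : basis X) A a c * B c b.
Definition op_sub X (A B : Op X) : Op X := fun a b => A a b - B a b.
Definition op_id X : Op X := fun a b => (a == b)%:R.

Definition positive X (A : Op X) : Prop :=
  forall v : basis X -> C,
    0 <= \sum_(a : basis X) \sum_(b : basis X) (v a)^* * A a b * v b.

Definition loewner X (A B : Op X) : Prop := positive (op_sub B A).

Definition pdensity X (rho : Op X) : Prop := positive rho /\ op_tr rho <= 1.

Definition effect X (M : Op X) : Prop := positive M /\ loewner M (@op_id X).

(* Restriction of a basis state of X to W (meaningful for W `<=` X). *)
Definition restr (X W : {fset nat}) (a : basis X) : basis W :=
  [ffun w : W => match insub (val w) : option X with Some x => a x | None => false end].

Definition merge (X V : {fset nat}) (u : basis V) (a : basis X) : basis X :=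
  [ffun x : X => match insub (val x) : option V with Some v => u v | None => a x end].

(* Cylindrical extension M (x) I_{X \ W} of an operator M on H_W to H_X. *)
Definition ext_op (W X : {fset nat}) (M : Op W) : Op X :=
  fun a b => if [forall x : X, (val x \notin W) ==> (a x == b x)]
             then M (@restr X W a) (@restr X W b) else 0.

(* Extension E (x) id_{X \ V} of a super-operator on L(H_V) to L(H_X). *)
Definition ext_so (V X : {fset nat}) (E : SO V) (rho : Op X) : Op X :=
  fun a b => E (fun u v => rho (merge u a) (merge v b)) (@restr X V a) (@restr X V b).

Definition so_linear V (E : SO V) : Prop :=
  forall (k : C) (A B : Op V),
    E (fun a b => k * A a b + B a b) = (fun a b => k * E A a b + E B a b).

(* Complete positivity (ancillas are extra qubits, per the convention that
   super-operators are extended by tensoring with the identity). *)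
Definition completely_positive V (E : SO V) : Prop :=
  forall X : {fset nat}, (V `<=` X)%fset ->
    forall rho : Op X, positive rho -> positive (@ext_so V X E rho).

Definition trace_nonincreasing V (E : SO V) : Prop :=
  forall rho : Op V, positive rho -> op_tr (E rho) <= op_tr rho.

Definition trace_preserving V (E : SO V) : Prop :=
  forall rho : Op V, op_tr (E rho) = op_tr rho.

Definition DProg V (E : SO V) : Prop :=
  [/\ so_linear E, completely_positive E & trace_nonincreasing E].

Definition so_le V (E F : SO V) : Prop :=
  forall X : {fset nat}, (V `<=` X)%fset ->
    forall rho : Op X, positive rho ->
      positive (op_sub (@ext_so V X F rho) (@ext_so V X E rho)).

Definition models_tot V (E : SO V) (W : {fset nat}) (M N : Op W) : Prop :=
  forall X : {fset nat}, (V `|` W `<=` X)%fset ->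
    forall rho : Op X, pdensity rho ->
      op_tr (op_mul (@ext_op W X M) rho) <= op_tr (op_mul (@ext_op W X N) (@ext_so V X E rho)).

Definition models_par V (E : SO V) (W : {fset nat}) (M N : Op W) : Prop :=
  forall X : {fset nat}, (V `|` W `<=` X)%fset ->
    forall rho : Op X, pdensity rho ->
      op_tr (op_mul (@ext_op W X M) rho) <=
      op_tr (op_mul (@ext_op W X N) (@ext_so V X E rho)) + op_tr rho - op_tr (@ext_so V X E rho).

Definition refine_tot V (E F : SO V) : Prop :=
  forall (W : {fset nat}) (M N : Op W), effect M -> effect N ->
    models_tot E M N -> models_tot F M N.

Definition refine_par V (E F : SO V) : Prop :=
  forall (W : {fset nat}) (M N : Op W), effect M -> effect N ->
    models_par E M N -> models_par F M N.

Definition equiv_tot V (E F : SO V) : Prop := refine_tot E F /\ refine_tot F E.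
Definition equiv_par V (E F : SO V) : Prop := refine_par E F /\ refine_par F E.

End Quantum.

Arguments op_id {R} X _ _.
Arguments restr {X} W a.
Arguments ext_op {R W} X M _ _.
Arguments ext_so {R V} X E rho _ _.

(** Item (1): if [F - E] is completely positive then [tr (N F(rho)) - tr (N E(rho))]
  is the trace of a product of two positive operators, hence nonnegative; for
  partial correctness the termination term [tr rho - tr E(rho)] turns this into
  the same argument with [I - N] in place of [N] and [E], [F] exchanged.
  Conversely, Schroedinger-Heisenberg duality [tr (N E(rho)) = tr (E^*(N) rho)]
  shows that [E] satisfies the tight specifications [(E^*(P), P)] (total) and
  [(I - E^*(P), I - P)] (partial) for every effect [P] on an extension of [V];
  transferring them to [F] gives [tr (P E(rho)) <= tr (P F(rho))] (resp. [>=])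
  for all effects [P], and testing against rank-one projections yields
  positivity of [F(rho) - E(rho)] (resp. [E(rho) - F(rho)]).  Items (3) and (4)
  follow because a positive operator of trace zero vanishes and linear maps
  agreeing on positive operators are equal. *)

From HB Require Import structures.
From mathcomp Require Import all_boot all_order all_algebra.
From mathcomp Require Import finmap complex reals.
From mathcomp Require Import ring sesquilinear spectral boolp.

Set Implicit Arguments.
Unset Strict Implicit.
Unset Printing Implicit Defensive.
Import Order.TTheory GRing.Theory Num.Theory.
Local Open Scope ring_scope.

Section DeltaSums.
Variables (R : pzSemiRingType) (T : finType).

Lemma sum_mul_delta (f : T -> R) a : \sum_q f q * (q == a)%:R = f a.
Proof.
rewrite (bigD1 a) //= eqxx mulr1 big1 ?addr0 // => q /negbTE ->; by rewrite mulr0.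
Qed.

Lemma sum_delta_mul (f : T -> R) a : \sum_q (q == a)%:R * f q = f a.
Proof.
rewrite (bigD1 a) //= eqxx mul1r big1 ?addr0 // => q /negbTE ->; by rewrite mul0r.
Qed.

End DeltaSums.

Section PositiveMatrix.
Variable C : numClosedFieldType.
Local Open Scope sesquilinear_scope.

Lemma psd_mx_spectral n (M : 'M[C]_n) : M \is hermsymmx ->
  (forall v : 'I_n -> C, 0 <= \sum_i \sum_j (v i)^* * M i j * v j) ->
  exists d : 'I_n -> C, exists w : 'I_n -> 'I_n -> C,
    (forall k, 0 <= d k) /\ forall i j, M i j = \sum_k d k * w k i * (w k j)^*.
Proof.
move=> hM pM.
have PU : spectralmx M \is unitarymx := spectral_unitarymx M.
have /orthomx_spectralP eM := hermitian_normalmx hM.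
rewrite invmx_unitary // in eM.
move: (spectralmx M) (spectral_diag M) PU eM => P s PU eM.
exists (fun k => s 0 k), (fun k i => (P k i)^*); split; last first.
  move=> i j; rewrite eM mul_mx_diag !mxE; apply: eq_bigr => k _.
  by rewrite !mxE conjCK [_ * s 0 k]mulrC.
move=> k.
have eD : diag_mx s = P *m M *m P^t*.
  by rewrite eM !mulmxA (unitarymxP PU) mul1mx -mulmxA (unitarymxP PU) mulmx1.
have := pM (fun i => (P k i)^*).
have -> : s 0 k = diag_mx s k k by rewrite mxE eqxx mulr1n.
rewrite eD mxE.
under [X in _ -> _ <= X]eq_bigr => j _ do rewrite !mxE big_distrl /=.
rewrite exchange_big /=.
congr (_ <= _); apply: eq_bigr => i _; apply: eq_bigr => j _.
by rewrite conjCK.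
Qed.

End PositiveMatrix.

Section PositiveForms.
Variables (C : numClosedFieldType) (T : finType).
Implicit Types (A B D P : T -> T -> C) (v x : T -> C).

Definition qform A v := \sum_a \sum_b (v a)^* * A a b * v b.
Definition psd A := forall v, 0 <= qform A v.
Definition ftr A := \sum_a A a a.
Definition fmul A B : T -> T -> C := fun a b => \sum_c A a c * B c b.

Lemma qformE A v : qform A v = \sum_a (v a)^* * \sum_b A a b * v b.
Proof.
by apply: eq_bigr => a _; rewrite mulr_sumr; apply: eq_bigr => b _; rewrite mulrA.
Qed.

Lemma qform_pair A a b (s t : C) :
  qform A (fun p => s * (p == a)%:R + t * (p == b)%:R) =
  s^* * s * A a a + s^* * t * A a b + t^* * s * A b a + t^* * t * A b b.
Proof.
rewrite qformE.
have inner p : \sum_q A p q * (s * (q == a)%:R + t * (q == b)%:R) = s * A p a + t * A p b.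
  rewrite (eq_bigr (fun q => s * (A p q * (q == a)%:R) + t * (A p q * (q == b)%:R))).
    by rewrite big_split /= -!mulr_sumr !sum_mul_delta.
  by move=> q _; ring.
under eq_bigr => p _ do rewrite inner.
rewrite (eq_bigr (fun p => s^* * ((p == a)%:R * (s * A p a + t * A p b))
                         + t^* * ((p == b)%:R * (s * A p a + t * A p b)))).
  by rewrite big_split /= -!mulr_sumr !sum_delta_mul; ring.
by move=> p _; rewrite rmorphD !rmorphM /= !conjC_nat; ring.
Qed.

Lemma qformB A B v : qform (fun a b => A a b - B a b) v = qform A v - qform B v.
Proof.
rewrite /qform -sumrB; apply: eq_bigr => a _; rewrite -sumrB.
by apply: eq_bigr => b _; ring.
Qed.

Lemma qform_id v : qform (fun a b => (a == b)%:R) v = \sum_a (v a)^* * v a.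
Proof.
rewrite qformE; apply: eq_bigr => a _; congr (_ * _).
by rewrite (eq_bigr (fun b => (b == a)%:R * v b)) ?sum_delta_mul // => b _; rewrite eq_sym.
Qed.

Lemma qform_rank1 x v :
  qform (fun p q => x p * (x q)^*) v = (\sum_a (v a)^* * x a) * (\sum_a (v a)^* * x a)^*.
Proof.
rewrite raddf_sum /= big_distrlr /=; apply: eq_bigr => a _; apply: eq_bigr => b _.
by rewrite rmorphM /= conjCK; ring.
Qed.

(* Polarization: evaluate the form at [e_a + e_b] and [e_a + i e_b]. *)
Lemma eq0_of_qform_eq0 A : (forall v, qform A v = 0) -> forall a b, A a b = 0.
Proof.
move=> H a b.
have diag0 c : A c c = 0.
  have := H (fun p => 1 * (p == c)%:R + 0 * (p == c)%:R); rewrite qform_pair.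
  by rewrite conjC1 conjC0 !(mul0r, mulr0, add0r, addr0, mul1r).
have E1 := H (fun p => 1 * (p == a)%:R + 1 * (p == b)%:R).
rewrite qform_pair conjC1 !mul1r !diag0 add0r addr0 in E1.
have E2 := H (fun p => 1 * (p == a)%:R + 'i * (p == b)%:R).
rewrite qform_pair conjC1 conjCi !mul1r !mulr1 !diag0 add0r mulr0 addr0 in E2.
have : (2 * 'i) * A a b = 0.
  have -> : (2 * 'i) * A a b = 'i * (A a b + A b a) + ('i * A a b + - 'i * A b a) by ring.
  by rewrite E1 E2 mulr0 addr0.
by move/eqP; rewrite !mulf_eq0 pnatr_eq0 /= (negbTE (neq0Ci C)) => /eqP.
Qed.

Lemma eq_psd A B : (forall a b, A a b = B a b) -> psd A -> psd B.
Proof. by move=> /funeq2P ->. Qed.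

Lemma psd0 : psd (fun _ _ => 0).
Proof.
move=> v; rewrite /qform big1 // => a _.
by rewrite big1 // => b _; rewrite mulr0 mul0r.
Qed.

Lemma psdZ A t : 0 <= t -> psd A -> psd (fun a b => t * A a b).
Proof.
move=> t0 pA v; have -> : qform (fun a b => t * A a b) v = t * qform A v.
  rewrite /qform mulr_sumr; apply: eq_bigr => a _; rewrite mulr_sumr.
  by apply: eq_bigr => b _; ring.
exact: mulr_ge0.
Qed.

Lemma psd_rank1 x : psd (fun p q => x p * (x q)^*).
Proof. by move=> v; rewrite qform_rank1; exact: mul_conjC_ge0. Qed.

Lemma psd_diag_ge0 A a : psd A -> 0 <= A a a.
Proof.
move=> /(_ (fun p => 1 * (p == a)%:R + 0 * (p == a)%:R)); rewrite qform_pair.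
by rewrite conjC1 conjC0 !(mul0r, mulr0, add0r, addr0, mul1r).
Qed.

Lemma psd_conj_sym A a b : psd A -> A b a = (A a b)^*.
Proof.
move=> pA.
have Ha := geC0_conj (psd_diag_ge0 a pA).
have Hb := geC0_conj (psd_diag_ge0 b pA).
have /geC0_conj E1 := pA (fun p => 1 * (p == a)%:R + 1 * (p == b)%:R).
have /geC0_conj E2 := pA (fun p => 1 * (p == a)%:R + 'i * (p == b)%:R).
rewrite qform_pair conjC1 !mul1r !rmorphD /= Ha Hb in E1.
rewrite qform_pair !rmorphD !rmorphM /= !conjCi !conjC1 Ha Hb !mul1r !mulr1 in E2.
rewrite raddfN /= conjCi opprK in E2.
have ii : 'i * 'i + 1 = 0 :> C by rewrite -expr2 sqrCi addNr.
have : 2 * ((A a b)^* - A b a) = 0.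
  have -> : 2 * ((A a b)^* - A b a) =
     ((A a a + (A a b)^* + (A b a)^* + A b b) - (A a a + A a b + A b a + A b b))
   + 'i * ((A a a + - 'i * (A a b)^* + 'i * (A b a)^* + 'i * - 'i * A b b) -
           (A a a + 'i * A a b + - 'i * A b a + - 'i * 'i * A b b))
   + ('i * 'i + 1) * (A a b - A b a + (A a b)^* - (A b a)^*) by ring.
  by rewrite E1 E2 ii !subrr mulr0 mul0r !addr0.
by move/eqP; rewrite mulf_eq0 pnatr_eq0 /= subr_eq0 => /eqP ->.
Qed.

Lemma psd_rank1_decomp A : psd A ->
  exists n, exists d : 'I_n -> C, exists w : 'I_n -> T -> C,
    (forall k, 0 <= d k) /\ forall a b, A a b = \sum_k d k * w k a * (w k b)^*.
Proof.
move=> pA.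
have sum_enum (F : T -> C) : \sum_(i < #|T|) F (enum_val i) = \sum_a F a.
  rewrite (reindex (@enum_rank T)); last exact/onW_bij/enum_rank_bij.
  by apply: eq_bigr => a _; rewrite enum_rankK.
pose M : 'M[C]_#|T| := \matrix_(i, j) A (enum_val i) (enum_val j).
have hM : M \is hermsymmx.
  apply/is_hermitianmxP; apply/matrixP => i j; rewrite !mxE expr0 mul1r.
  exact: psd_conj_sym.
have pM (v : 'I_#|T| -> C) : 0 <= \sum_i \sum_j (v i)^* * M i j * v j.
  have := pA (fun a => v (enum_rank a)); rewrite /qform -sum_enum.
  under eq_bigr => i _ do rewrite -sum_enum.
  congr (_ <= _); apply: eq_bigr => i _; apply: eq_bigr => j _.
  by rewrite !mxE !enum_valK.
have [d [w [d0 eM]]] := psd_mx_spectral hM pM.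
exists #|T|, d, (fun k a => w k (enum_rank a)); split => // a b.
by rewrite -eM mxE !enum_rankK.
Qed.

Lemma ftrB A B : ftr (fun a b => A a b - B a b) = ftr A - ftr B.
Proof. by rewrite /ftr -sumrB. Qed.

Lemma ftrZ B t : ftr (fun a b => t * B a b) = t * ftr B.
Proof. by rewrite /ftr mulr_sumr. Qed.

Lemma ftr_mulBl A A' B :
  ftr (fmul (fun a b => A a b - A' a b) B) = ftr (fmul A B) - ftr (fmul A' B).
Proof.
rewrite /ftr /fmul -sumrB; apply: eq_bigr => a _; rewrite -sumrB.
by apply: eq_bigr => b _; ring.
Qed.

Lemma ftr_mulBr A B B' :
  ftr (fmul A (fun a b => B a b - B' a b)) = ftr (fmul A B) - ftr (fmul A B').
Proof.
rewrite /ftr /fmul -sumrB; apply: eq_bigr => a _; rewrite -sumrB.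
by apply: eq_bigr => b _; ring.
Qed.

Lemma ftr_mulZr A B t : ftr (fmul A (fun a b => t * B a b)) = t * ftr (fmul A B).
Proof.
rewrite /ftr /fmul mulr_sumr; apply: eq_bigr => a _; rewrite mulr_sumr.
by apply: eq_bigr => b _; ring.
Qed.

Lemma ftr_mul1l B : ftr (fmul (fun a b => (a == b)%:R) B) = ftr B.
Proof.
rewrite /ftr /fmul; apply: eq_bigr => a _.
by rewrite (eq_bigr (fun c => (c == a)%:R * B c a)) ?sum_delta_mul // => c _; rewrite eq_sym.
Qed.

Lemma ftr_mul_rank1_sum A B n (d : 'I_n -> C) (w : 'I_n -> T -> C) :
  (forall a b, A a b = \sum_k d k * w k a * (w k b)^*) ->
  ftr (fmul A B) = \sum_k d k * qform B (w k).
Proof.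
move=> eA; rewrite /ftr /fmul.
under eq_bigr => a _ do under eq_bigr => c _ do rewrite eA big_distrl /=.
under eq_bigr => a _ do rewrite exchange_big /=.
rewrite exchange_big /=; apply: eq_bigr => k _.
rewrite /qform mulr_sumr exchange_big /=; apply: eq_bigr => c _.
by rewrite mulr_sumr; apply: eq_bigr => a _; ring.
Qed.

Lemma ftr_mul_psd_ge0 A B : psd A -> psd B -> 0 <= ftr (fmul A B).
Proof.
move=> /psd_rank1_decomp [n [d [w [d0 eA]]]] pB.
by rewrite (ftr_mul_rank1_sum B eA); apply: sumr_ge0 => k _; exact: mulr_ge0.
Qed.

Lemma ftr_psd_ge0 A : psd A -> 0 <= ftr A.
Proof. by move=> pA; apply: sumr_ge0 => a _; exact: psd_diag_ge0. Qed.

Lemma psd_ftr_eq0 A : psd A -> ftr A = 0 -> forall a b, A a b = 0.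
Proof.
move=> /psd_rank1_decomp [n [d [w [d0 eA]]]] t0 a b.
have norm_ge0 k c : 0 <= d k * (w k c * (w k c)^*) := mulr_ge0 (d0 k) (mul_conjC_ge0 _).
have sum0 : \sum_k \sum_c d k * (w k c * (w k c)^*) = 0.
  rewrite -[in RHS]t0 /ftr exchange_big /=; apply: eq_bigr => c _.
  by rewrite eA; apply: eq_bigr => k _; rewrite mulrA.
have wk0 k : \sum_c d k * (w k c * (w k c)^*) = 0.
  by apply: (@psumr_eq0P _ _ _ _ _ sum0) => // j _; apply: sumr_ge0 => c _.
rewrite eA big1 // => k _.
have /eqP := @psumr_eq0P _ _ _ _ (fun c _ => norm_ge0 k c) (wk0 k) a isT.
rewrite mulf_eq0 mul_conjC_eq0 => /orP [/eqP -> | /eqP ->]; by rewrite !(mul0r, mulr0).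
Qed.

(* Completing the square: [v^* (I - x x^* / s) v = |v - (x^* v / s) x|^2] with [s = |x|^2]. *)
Lemma psd_id_sub_proj x : let s := \sum_a x a * (x a)^* in s != 0 ->
  psd (fun a b => (a == b)%:R - x a * (x b)^* / s).
Proof.
move=> s s0 v.
have si : (s^-1)^* = s^-1.
  by apply: geC0_conj; rewrite invr_ge0; apply: sumr_ge0 => a _; exact: mul_conjC_ge0.
set z := \sum_a (v a)^* * x a.
have zc : z^* = \sum_a (x a)^* * v a.
  by rewrite rmorph_sum; apply: eq_bigr => a _; rewrite rmorphM /= conjCK mulrC.
set u := fun a => v a - (z^* / s) * x a.
have -> : qform (fun a b => (a == b)%:R - x a * (x b)^* / s) v = \sum_a (u a)^* * u a.
  have -> : qform (fun a b => (a == b)%:R - x a * (x b)^* / s) v =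
            \sum_a (v a)^* * v a - z * z^* / s.
    rewrite qformE zc big_distrl /= big_distrl /= -sumrB; apply: eq_bigr => a _.
    rewrite (eq_bigr (fun b => (b == a)%:R * v b - x a / s * ((x b)^* * v b))).
      by rewrite sumrB sum_delta_mul -mulr_sumr; ring.
    by move=> b _; rewrite eq_sym; ring.
  have -> : \sum_a (u a)^* * u a =
     \sum_a (v a)^* * v a - z^* / s * z - z / s * z^* + z / s * (z^* / s) * s.
    rewrite /u (eq_bigr (fun a => ((v a)^* * v a - z^* / s * ((v a)^* * x a))
                  - z / s * ((x a)^* * v a) + z / s * (z^* / s) * (x a * (x a)^*))); last first.
      by move=> a _; rewrite rmorphB rmorphM /= rmorphM /= conjCK si; ring.
    by rewrite big_split /= !sumrB -!mulr_sumr -zc.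
  by field.
by apply: sumr_ge0 => a _; rewrite mulrC; exact: mul_conjC_ge0.
Qed.

Lemma psd_of_ftr_mul_ge0 D :
  (forall P, psd P -> psd (fun a b => (a == b)%:R - P a b) -> 0 <= ftr (fmul P D)) ->
  psd D.
Proof.
move=> H v.
set s := \sum_a v a * (v a)^*.
have s0 : 0 <= s by apply: sumr_ge0 => a _; exact: mul_conjC_ge0.
have [/eqP sz | snz] := boolP (s == 0).
  rewrite /qform big1 // => a _; rewrite big1 // => b _.
  have /eqP := @psumr_eq0P _ _ _ _ (fun a _ => mul_conjC_ge0 (v a)) sz a isT.
  by rewrite mul_conjC_eq0 => /eqP ->; rewrite conjC0 !mul0r.
have pP : psd (fun a b => s^-1 * (v a * (v b)^*)).
  by apply: psdZ; [rewrite invr_ge0 | exact: psd_rank1].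
have pIP : psd (fun a b => (a == b)%:R - s^-1 * (v a * (v b)^*)).
  by apply: eq_psd (psd_id_sub_proj snz) => a b /=; congr (_ - _); rewrite -/s; ring.
have := H _ pP pIP.
have -> : ftr (fmul (fun a b => s^-1 * (v a * (v b)^*)) D) = s^-1 * qform D v.
  rewrite /ftr /fmul /qform mulr_sumr exchange_big /=; apply: eq_bigr => c _.
  by rewrite mulr_sumr; apply: eq_bigr => a _; ring.
by rewrite pmulr_rge0 // invr_gt0 lt_def snz s0.
Qed.

(* The masked form is the sum over [c] of the compressions of [A] to the fibres [k a = c]. *)
Lemma psd_block (K : finType) (A : T -> T -> C) (k : T -> K) : psd A ->
  psd (fun a b => (k a == k b)%:R * A a b).
Proof.
move=> pA v.
have -> : qform (fun a b => (k a == k b)%:R * A a b) v =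
          \sum_c qform A (fun a => (k a == c)%:R * v a).
  rewrite /qform [RHS]exchange_big /=; apply: eq_bigr => a _.
  rewrite [RHS]exchange_big /=; apply: eq_bigr => b _.
  rewrite (_ : (v a)^* * ((k a == k b)%:R * A a b) * v b =
               (k a == k b)%:R * ((v a)^* * A a b * v b)); last by ring.
  rewrite -(sum_mul_delta (fun c => (k a == c)%:R * ((v a)^* * A a b * v b)) (k b)).
  by apply: eq_bigr => c _; rewrite rmorphM /= conjC_nat [(k b == c)]eq_sym; ring.
by apply: sumr_ge0 => c _; exact: pA.
Qed.

End PositiveForms.

Section Pullback.
Variables (C : numClosedFieldType) (S T : finType).

Lemma sum_fiber (g : T -> S) (G : T -> S -> C) :
  \sum_(y : S) \sum_(a | g a == y) G a y = \sum_a G a (g a).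
Proof.
under eq_bigr => y _ do rewrite big_mkcond /=.
rewrite exchange_big /=; apply: eq_bigr => a _.
rewrite (bigD1 (g a)) //= eqxx big1 ?addr0 // => y /negbTE.
by rewrite eq_sym => ->.
Qed.

Lemma psd_comp (M : S -> S -> C) (g : T -> S) :
  psd M -> psd (fun a b => M (g a) (g b)).
Proof.
move=> pM v.
have := pM (fun y => \sum_(a | g a == y) v a).
congr (_ <= _).
rewrite /qform -(sum_fiber g (fun a y => \sum_b (v a)^* * M y (g b) * v b)).
apply: eq_bigr => y _.
under [RHS]eq_bigr => a _ do rewrite -(sum_fiber g (fun b y' => (v a)^* * M y y' * v b)).
rewrite exchange_big /=; apply: eq_bigr => y' _.
rewrite rmorph_sum -mulrA big_distrl /=; apply: eq_bigr => a _.
by rewrite mulr_sumr mulr_sumr; apply: eq_bigr => b _; rewrite mulrA.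
Qed.

End Pullback.

Section BasisSplit.
Variables (V X : {fset nat}).

Definition erase (a : basis X) : basis X :=
  [ffun x : X => if val x \in V then false else a x].

Lemma restr_merge (sVX : (V `<=` X)%fset) (u : basis V) (c : basis X) :
  restr V (merge u c) = u.
Proof.
apply/ffunP => w; rewrite !ffunE.
case: insubP => [x xX xw | ]; last by move=> /negP[]; apply: (fsubsetP sVX); exact: valP.
rewrite ffunE; case: insubP => [w' _ ww' | ]; last by rewrite xw => /negP[]; exact: valP.
by congr (u _); apply: val_inj; rewrite ww' xw.
Qed.

Lemma erase_merge (u : basis V) (c : basis X) : erase (merge u c) = erase c.
Proof.
apply/ffunP => x; rewrite !ffunE; case: ifP => // xV.
by case: insubP => // w; rewrite xV.
Qed.

Lemma erase_idem (a : basis X) : erase (erase a) = erase a.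
Proof. by apply/ffunP => x; rewrite !ffunE; case: (val x \in V). Qed.

Lemma merge_restr (a c : basis X) : erase a = erase c -> merge (restr V a) c = a.
Proof.
move=> e; apply/ffunP => x; rewrite !ffunE.
case: insubP => [w wV wx | xV].
  rewrite ffunE; case: insubP => [x' _ x'w | ]; last by rewrite wx => /negP[]; exact: valP.
  by congr (a _); apply: val_inj; rewrite x'w wx.
by have := congr1 (fun f : basis X => f x) e; rewrite !ffunE (negbTE xV) => ->.
Qed.

Lemma merge_merge (u v : basis V) (a : basis X) : merge v (merge u a) = merge v a.
Proof. by apply/ffunP => x; rewrite !ffunE; case: insubP. Qed.

Lemma eq_outside_erase (a b : basis X) :
  [forall x : X, (val x \notin V) ==> (a x == b x)] = (erase a == erase b).
Proof.
apply/forallP/eqP => [H | e x].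
  apply/ffunP => x; rewrite !ffunE; case: ifP => // xV.
  by have /implyP/(_ (negbT xV))/eqP := H x.
apply/implyP => xV; have := congr1 (fun f : basis X => f x) e.
by rewrite !ffunE (negbTE xV) => ->.
Qed.

Lemma erase_restr_eq (a b : basis X) :
  (erase a == erase b) && (restr V a == restr V b) = (a == b).
Proof.
apply/andP/eqP => [[/eqP ek /eqP er] | ->] //.
by rewrite -(merge_restr ek) er merge_restr.
Qed.

Lemma sum_basis_split (sVX : (V `<=` X)%fset) (M : nmodType) (f : basis X -> M) :
  \sum_a f a = \sum_(c | erase c == c) \sum_(u : basis V) f (merge u c).
Proof.
rewrite (partition_big erase (fun c => erase c == c)) /=; last first.
  by move=> a _; rewrite erase_idem.
apply: eq_bigr => c /eqP cc.
rewrite (reindex_onto (fun u => merge u c) (restr V)) /=; last first.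
  by move=> a /eqP ac; apply: merge_restr; rewrite ac cc.
by apply: eq_bigl => u; rewrite erase_merge cc eqxx (restr_merge sVX) eqxx.
Qed.

End BasisSplit.

Lemma restr_id (X : {fset nat}) (a : basis X) : restr X a = a.
Proof.
apply/ffunP => x; rewrite ffunE; case: insubP => [y _ yx | ]; last by move=> /negP[]; exact: valP.
by congr (a _); apply: val_inj.
Qed.

Lemma merge_id (X : {fset nat}) (u a : basis X) : merge u a = u.
Proof.
apply/ffunP => x; rewrite ffunE; case: insubP => [y _ yx | ]; last by move=> /negP[]; exact: valP.
by congr (u _); apply: val_inj.
Qed.

Lemma restr_restr (V X Y : {fset nat}) (sVX : (V `<=` X)%fset) (a : basis Y) :
  restr V (restr X a) = restr V a.
Proof.
apply/ffunP => w; rewrite !ffunE.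
case: insubP => [x xX xw | ]; last by move=> /negP[]; apply: (fsubsetP sVX); exact: valP.
rewrite ffunE; case: insubP => [y yY yx | nY]; case: insubP => [y' _ y'w | nY'] //.
- by congr (a _); apply: val_inj; rewrite yx y'w xw.
- by case/negP: nY'; rewrite -xw -yx; exact: valP.
- by case/negP: nY; rewrite xw -y'w; exact: valP.
Qed.

Lemma merge_merge_restr (V X Y : {fset nat}) (sVX : (V `<=` X)%fset)
    (u : basis V) (a : basis Y) :
  merge (merge u (restr X a)) a = merge u a.
Proof.
apply/ffunP => y; rewrite !ffunE.
case: (insubP _ (val y)) => [x xX xy | nX]; case: (insubP _ (val y)) => [w wV wy | nV] //.
all: rewrite ?ffunE.
- case: insubP => [w' _ w'x | n]; first by congr (u _); apply: val_inj; rewrite w'x xy wy.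
  by case/negP: n; rewrite xy.
- case: insubP => [w' w'V w'x | _]; first by case/negP: nV; rewrite -xy.
  case: insubP => [y' _ y'x | n]; first by congr (a _); apply: val_inj; rewrite y'x xy.
  by case/negP: n; rewrite xy; exact: valP.
- by case/negP: nX; apply: (fsubsetP sVX).
Qed.

Section LinearSuperOperator.
Variables (R : realType) (X : {fset nat}) (G : SO R X).
Hypothesis linG : so_linear G.
Local Notation C := (R[i]).

Definition unit_op (i j : basis X) : Op R X := fun p q => (p == i)%:R * (q == j)%:R.

(* The Heisenberg-picture dual [G^*(N)]: entry [(b, a)] is [tr (G^*(N) |a><b|) = tr (N G(|a><b|))]. *)
Definition so_dual (N : Op R X) : Op R X := fun b a => op_tr (op_mul N (G (unit_op a b))).

Lemma linear_so0 : G (fun _ _ => 0) = (fun _ _ => 0).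
Proof.
have := linG (-1) (fun _ _ => 0) (fun _ _ => 0).
have -> : (fun a b : basis X => -1 * (fun _ _ => 0 : C) a b + (fun _ _ => 0 : C) a b) =
          (fun _ _ => 0) by apply/funeq2P => a b; rewrite mulr0 addr0.
by move=> ->; apply/funeq2P => a b; rewrite mulN1r addNr.
Qed.

Lemma linear_soZ k A : G (fun a b => k * A a b) = (fun a b => k * G A a b).
Proof.
have := linG k A (fun _ _ => 0).
have -> : (fun a b : basis X => k * A a b + (fun _ _ => 0 : C) a b) =
          (fun a b => k * A a b) by apply/funeq2P => a b; rewrite addr0.
by move=> ->; rewrite linear_so0; apply/funeq2P => a b; rewrite addr0.
Qed.

Lemma linear_so_sum (I : Type) (r : seq I) (c : I -> C) (A : I -> Op R X) :
  G (fun p q => \sum_(i <- r) c i * A i p q) = (fun p q => \sum_(i <- r) c i * G (A i) p q).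
Proof.
elim: r => [|x r IH].
  have -> : (fun p q : basis X => \sum_(i <- [::]) c i * A i p q) = (fun _ _ => 0).
    by apply/funeq2P => a b; rewrite big_nil.
  by rewrite linear_so0; apply/funeq2P => a b; rewrite big_nil.
have -> : (fun p q : basis X => \sum_(i <- x :: r) c i * A i p q) =
   (fun p q => c x * A x p q + (fun p' q' => \sum_(i <- r) c i * A i p' q') p q).
  by apply/funeq2P => a b; rewrite big_cons.
by rewrite linG IH; apply/funeq2P => a b; rewrite big_cons.
Qed.

Lemma linear_so_expand B p q : G B p q = \sum_i \sum_j B i j * G (unit_op i j) p q.
Proof.
have eB : B = (fun p q => \sum_(ij : (basis X * basis X)%type) B ij.1 ij.2 * unit_op ij.1 ij.2 p q).
  apply/funeq2P => a b; rewrite -(pair_big xpredT xpredT (fun i j => B i j * unit_op i j a b)) /=.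
  symmetry; rewrite (eq_bigr (fun i => B i b * (i == a)%:R)) ?sum_mul_delta // => i _.
  rewrite (eq_bigr (fun j => B i j * (i == a)%:R * (j == b)%:R)) ?sum_mul_delta // => j _.
  by rewrite /unit_op (eq_sym a) (eq_sym b) mulrA.
by rewrite {1}eB linear_so_sum -(pair_big xpredT xpredT (fun i j => B i j * G (unit_op i j) p q)).
Qed.

Lemma op_tr_mul_so_expand N B :
  op_tr (op_mul N (G B)) = \sum_i \sum_j B i j * op_tr (op_mul N (G (unit_op i j))).
Proof.
rewrite /op_tr /op_mul.
under eq_bigr => a _ do under eq_bigr => c _ do rewrite linear_so_expand mulr_sumr.
under eq_bigr => a _ do rewrite exchange_big /=.
rewrite exchange_big /=; apply: eq_bigr => i _.
under eq_bigr => a _ do under eq_bigr => j _ do rewrite mulr_sumr.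
under eq_bigr => a _ do rewrite exchange_big /=.
rewrite exchange_big /=; apply: eq_bigr => j _.
rewrite mulr_sumr; apply: eq_bigr => a _.
by rewrite mulr_sumr; apply: eq_bigr => c _; ring.
Qed.

Lemma qform_so_dual (P : Op R X) (w : basis X -> C) :
  qform (so_dual P) w = op_tr (op_mul P (G (fun a b => w a * (w b)^*))).
Proof.
rewrite op_tr_mul_so_expand /qform exchange_big /=.
by apply: eq_bigr => b _; apply: eq_bigr => a _; rewrite /so_dual; ring.
Qed.

End LinearSuperOperator.

Arguments unit_op {R X}.

Section Extension.
Variable R : realType.

Lemma op_trE (X : {fset nat}) (A : Op R X) : op_tr A = ftr A. Proof. by []. Qed.
Lemma op_mulE (X : {fset nat}) (A B : Op R X) : op_mul A B = fmul A B. Proof. by []. Qed.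

Lemma eq_op_of_psd_sub (X : {fset nat}) (A B : Op R X) :
  positive (op_sub A B) -> op_tr A = op_tr B -> A = B.
Proof.
move=> pAB trAB; apply/funeq2P => a b; apply/subr0_eq.
by apply: psd_ftr_eq0 pAB _ a b; rewrite /op_sub ftrB; apply/eqP; rewrite subr_eq0; apply/eqP.
Qed.

Lemma ext_so_linear (V X : {fset nat}) (E : SO R V) :
  so_linear E -> so_linear (ext_so X E).
Proof.
move=> linE k A B; apply/funeq2P => a b; rewrite /ext_so.
by rewrite (linE k (fun u v => A (merge u a) (merge v b)) (fun u v => B (merge u a) (merge v b))).
Qed.

Lemma ext_so_same (V : {fset nat}) (E : SO R V) (rho : Op R V) : ext_so V E rho = E rho.
Proof.
apply/funeq2P => a b; rewrite /ext_so !restr_id.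
by congr (E _ _ _); apply/funeq2P => u v; rewrite !merge_id.
Qed.

Lemma ext_so_comp (V X Y : {fset nat}) (E : SO R V) (rho : Op R Y) : (V `<=` X)%fset ->
  ext_so Y (ext_so X E) rho = ext_so Y E rho.
Proof.
move=> sVX; apply/funeq2P => a b; rewrite /ext_so !(restr_restr sVX).
by congr (E _ _ _); apply/funeq2P => u v; rewrite !merge_merge_restr.
Qed.

Lemma ext_so_merge (V X : {fset nat}) (E : SO R V) (rho : Op R X) (sVX : (V `<=` X)%fset)
    u u' c c' :
  ext_so X E rho (merge u c) (merge u' c') = E (fun v v' => rho (merge v c) (merge v' c')) u u'.
Proof.
rewrite /ext_so !(restr_merge sVX).
by congr (E _ _ _); apply/funeq2P => v v'; rewrite !merge_merge.
Qed.

Lemma ext_so_tr_le (V X : {fset nat}) (E : SO R V) (rho : Op R X) : (V `<=` X)%fset ->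
  trace_nonincreasing E -> positive rho -> op_tr (ext_so X E rho) <= op_tr rho.
Proof.
move=> sVX tnE prho.
rewrite /op_tr (sum_basis_split sVX) [X in _ <= X](sum_basis_split sVX).
apply: ler_sum => c _.
under eq_bigr => u _ do rewrite (ext_so_merge _ _ sVX).
exact: (tnE _ (psd_comp (fun u => merge u c) prho)).
Qed.

Lemma ext_op_erase (W Y : {fset nat}) (M : Op R W) a b :
  ext_op Y M a b = (erase W a == erase W b)%:R * M (restr W a) (restr W b).
Proof. by rewrite /ext_op eq_outside_erase; case: eqP => _; rewrite ?mul1r ?mul0r. Qed.

Lemma ext_op_psd (W Y : {fset nat}) (M : Op R W) : positive M -> positive (ext_op Y M).
Proof.
move=> pM; apply: eq_psd (psd_block (@erase W Y) (psd_comp (restr W) pM)) => a b.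
by rewrite ext_op_erase.
Qed.

Lemma ext_opB (W Y : {fset nat}) (A B : Op R W) a b :
  ext_op Y (op_sub A B) a b = ext_op Y A a b - ext_op Y B a b.
Proof. by rewrite /ext_op /op_sub; case: ifP; rewrite ?subr0. Qed.

Lemma ext_op1 (W Y : {fset nat}) a b : ext_op Y (@op_id R W) a b = @op_id R Y a b.
Proof.
rewrite ext_op_erase /op_id -(erase_restr_eq W a b).
by case: (erase W a == erase W b); case: (restr W a == restr W b); rewrite ?mul1r ?mul0r.
Qed.

Lemma ext_op_same (X : {fset nat}) (M : Op R X) a b : ext_op X M a b = M a b.
Proof.
rewrite /ext_op (_ : [forall x : X, _] = true) ?restr_id //.
by apply/forallP => x; apply/implyP => /negP[]; exact: valP.
Qed.

Lemma op_tr_ext_op_same (X : {fset nat}) (P D : Op R X) :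
  op_tr (op_mul (ext_op X P) D) = op_tr (op_mul P D).
Proof. by apply: eq_bigr => a _; apply: eq_bigr => c _; rewrite ext_op_same. Qed.

Lemma op_tr_ext_op_compl (W Y : {fset nat}) (K : Op R W) (D : Op R Y) :
  op_tr (op_mul (ext_op Y (op_sub (@op_id R W) K)) D) = op_tr D - op_tr (op_mul (ext_op Y K) D).
Proof.
rewrite [op_tr D]op_trE -(ftr_mul1l D) -(ftr_mulBl (fun a b => @op_id R Y a b)).
by apply: eq_bigr => a _; apply: eq_bigr => c _; rewrite ext_opB ext_op1.
Qed.

Lemma op_tr_ext_op_mul (W Y : {fset nat}) (sWY : (W `<=` Y)%fset) (M : Op R W) (D : Op R Y) :
  op_tr (op_mul (ext_op Y M) D) =
  \sum_(c | erase W c == c) \sum_u \sum_u' M u u' * D (merge u' c) (merge u c).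
Proof.
rewrite /op_tr /op_mul (sum_basis_split sWY); apply: eq_bigr => c /eqP cc.
apply: eq_bigr => u _; rewrite (sum_basis_split sWY) (bigD1 c) /=; last by rewrite cc.
rewrite [X in _ + X]big1 ?addr0; last first.
  move=> c' /andP [/eqP cc' nc]; apply: big1 => u' _.
  by rewrite ext_op_erase !erase_merge cc cc' eq_sym (negbTE nc) !mul0r.
apply: eq_bigr => u' _.
by rewrite ext_op_erase !erase_merge eqxx mul1r !(restr_merge sWY).
Qed.

Lemma op_tr_so_dual (V Y : {fset nat}) (G : SO R V) (linG : so_linear G)
    (sVY : (V `<=` Y)%fset) (N : Op R V) (rho : Op R Y) :
  op_tr (op_mul (ext_op Y (so_dual G N)) rho) = op_tr (op_mul (ext_op Y N) (ext_so Y G rho)).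
Proof.
rewrite !(op_tr_ext_op_mul sVY); apply: eq_bigr => c _.
under [RHS]eq_bigr => u _ do under eq_bigr => u' _ do rewrite (ext_so_merge _ _ sVY).
rewrite -[RHS]/(op_tr (op_mul N (G (fun v v' => rho (merge v c) (merge v' c))))).
rewrite (op_tr_mul_so_expand linG) /so_dual exchange_big /=.
by apply: eq_bigr => i _; apply: eq_bigr => j _; rewrite mulrC.
Qed.

(* [I - E^*(P)] is positive because [tr (P E(|w><w|)) <= tr (E(|w><w|)) <= |w|^2]. *)
Lemma so_dual_effect (V X : {fset nat}) (E : SO R V) (sVX : (V `<=` X)%fset) (P : Op R X) :
  DProg E -> positive P -> positive (op_sub (@op_id R X) P) ->
  positive (so_dual (ext_so X E) P) /\ positive (op_sub (@op_id R X) (so_dual (ext_so X E) P)).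
Proof.
case=> linE cpE tnE pP pIP.
have linG := ext_so_linear (X := X) linE.
have psd_img w : positive (ext_so X E (fun a b => w a * (w b)^*)).
  exact/(cpE X sVX)/psd_rank1.
split=> w.
  change (0 <= qform (so_dual (ext_so X E) P) w).
  by rewrite (qform_so_dual linG); exact: ftr_mul_psd_ge0 pP (psd_img w).
change (0 <= qform (fun a b => @op_id R X a b - so_dual (ext_so X E) P a b) w).
rewrite (qformB (fun a b => @op_id R X a b)) qform_id (qform_so_dual linG).
set sigma := ext_so X E _.
have trP_le : op_tr (op_mul P sigma) <= op_tr sigma.
  rewrite -subr_ge0; have := ftr_mul_psd_ge0 pIP (psd_img w).
  by rewrite (ftr_mulBl (fun a b => @op_id R X a b)) ftr_mul1l.
have tr_le : op_tr sigma <= \sum_a (w a)^* * w a.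
  have := ext_so_tr_le sVX tnE (psd_rank1 w).
  by congr (_ <= _); apply: eq_bigr => a _; rewrite mulrC.
by rewrite subr_ge0; exact: le_trans trP_le tr_le.
Qed.

(* Correctness formulas are stated for partial density operators only; by
   linearity they extend to all positive [rho], rescaled by [(1 + tr rho)^-1]. *)
Lemma pdensity_scale (X : {fset nat}) (rho : Op R X) : positive rho ->
  let t := (1 + op_tr rho)^-1 in 0 < t /\ pdensity (fun a b => t * rho a b).
Proof.
move=> prho t.
have tr0 : 0 <= op_tr rho := ftr_psd_ge0 prho.
have t0 : 0 < t by rewrite invr_gt0 (lt_le_trans ltr01) // lerDl.
split=> //; split; first exact: psdZ (ltW t0) prho.
rewrite op_trE ftrZ -subr_ge0 (_ : 1 - t * op_tr rho = t) 1?ltW //.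
by rewrite /t; field; rewrite lt0r_neq0 // (lt_le_trans ltr01) // lerDl.
Qed.

Lemma models_tot_psd (V W : {fset nat}) (F : SO R V) (M N : Op R W) :
  so_linear F -> models_tot F M N ->
  forall Y, (V `|` W `<=` Y)%fset -> forall rho : Op R Y, positive rho ->
  op_tr (op_mul (ext_op Y M) rho) <= op_tr (op_mul (ext_op Y N) (ext_so Y F rho)).
Proof.
move=> linF H Y sY rho prho.
have [t0 pd] := pdensity_scale prho.
have := H Y sY _ pd.
by rewrite (linear_soZ (ext_so_linear (X := Y) linF)) !op_mulE !op_trE !ftr_mulZr ler_pM2l.
Qed.

Lemma models_par_psd (V W : {fset nat}) (F : SO R V) (M N : Op R W) :
  so_linear F -> models_par F M N ->
  forall Y, (V `|` W `<=` Y)%fset -> forall rho : Op R Y, positive rho ->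
  op_tr (op_mul (ext_op Y M) rho) <=
  op_tr (op_mul (ext_op Y N) (ext_so Y F rho)) + op_tr rho - op_tr (ext_so Y F rho).
Proof.
move=> linF H Y sY rho prho.
have [t0 pd] := pdensity_scale prho.
have := H Y sY _ pd.
rewrite (linear_soZ (ext_so_linear (X := Y) linF)).
by rewrite !op_mulE !op_trE !ftr_mulZr !ftrZ -mulrDr -mulrBr ler_pM2l.
Qed.

End Extension.

Section Refinement.
Variables (R : realType) (V : {fset nat}).
Implicit Types E F : SO R V.

Lemma refine_tot_of_so_le E F : so_le E F -> refine_tot E F.
Proof.
move=> leEF W M N _ [pN _] HE Y sY rho pd.
have sVY : (V `<=` Y)%fset by apply: fsubset_trans sY; exact: fsubsetUl.
apply: le_trans (HE Y sY rho pd) _.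
rewrite -subr_ge0 !op_mulE !op_trE -ftr_mulBr.
exact: ftr_mul_psd_ge0 (ext_op_psd pN) (leEF Y sVY rho pd.1).
Qed.

Lemma refine_par_of_so_le E F : so_le F E -> refine_par E F.
Proof.
move=> leFE W M N _ [_ pIN] HE Y sY rho pd.
have sVY : (V `<=` Y)%fset by apply: fsubset_trans sY; exact: fsubsetUl.
have := ftr_mul_psd_ge0 (ext_op_psd (Y := Y) pIN) (leFE Y sVY rho pd.1).
rewrite ftr_mulBr -!op_mulE -!op_trE !op_tr_ext_op_compl => gap.
have := HE Y sY rho pd; rewrite -subr_ge0 => slack.
rewrite -subr_ge0; apply: le_trans (addr_ge0 slack gap) _.
by rewrite le_eqVlt; apply/orP; left; apply/eqP; ring.
Qed.

(* [E] satisfies the tight total specification [(E^*(P), P)]. *)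
Lemma so_le_of_refine_tot E F : DProg E -> so_linear F -> refine_tot E F -> so_le E F.
Proof.
move=> dE linF HEF X sVX rho prho; have [linE _ _] := dE.
have dualE := op_tr_so_dual (ext_so_linear (X := X) linE).
apply: psd_of_ftr_mul_ge0 => P pP pIP; rewrite ftr_mulBr subr_ge0.
have [pM pIM] := so_dual_effect sVX dE pP pIP.
have tightE : models_tot E (so_dual (ext_so X E) P) P.
  move=> Y sY sigma _.
  have sXY : (X `<=` Y)%fset by apply: fsubset_trans sY; exact: fsubsetUr.
  by rewrite (dualE _ sXY) (ext_so_comp _ _ sVX).
have sX : (V `|` X `<=` X)%fset by rewrite fsubUset sVX fsubset_refl.
have := models_tot_psd linF (HEF X _ P (conj pM pIM) (conj pP pIP) tightE) sX prho.
by rewrite (dualE _ (fsubset_refl X)) (ext_so_comp _ _ sVX) !op_tr_ext_op_same.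
Qed.

(* [E] satisfies the tight partial specification [(I - E^*(P), I - P)]. *)
Lemma so_le_of_refine_par E F : DProg E -> so_linear F -> refine_par E F -> so_le F E.
Proof.
move=> dE linF HEF X sVX rho prho; have [linE _ _] := dE.
have dualE := op_tr_so_dual (ext_so_linear (X := X) linE).
apply: psd_of_ftr_mul_ge0 => P pP pIP.
rewrite ftr_mulBr -!op_mulE -!op_trE subr_ge0.
have [pM pIM] := so_dual_effect sVX dE pP pIP.
have compl_effect (Q : Op R X) :
    positive Q -> positive (op_sub (@op_id R X) Q) -> effect (op_sub (@op_id R X) Q).
  by move=> pQ pIQ; split=> //; apply: eq_psd pQ => a b; rewrite /op_sub; ring.
have tightE :
    models_par E (op_sub (@op_id R X) (so_dual (ext_so X E) P)) (op_sub (@op_id R X) P).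
  move=> Y sY sigma _.
  have sXY : (X `<=` Y)%fset by apply: fsubset_trans sY; exact: fsubsetUr.
  rewrite !op_tr_ext_op_compl (dualE _ sXY) (ext_so_comp _ _ sVX).
  by rewrite le_eqVlt; apply/orP; left; apply/eqP; ring.
have sX : (V `|` X `<=` X)%fset by rewrite fsubUset sVX fsubset_refl.
have := models_par_psd linF
  (HEF X _ _ (compl_effect _ pM pIM) (compl_effect _ pP pIP) tightE) sX prho.
rewrite !op_tr_ext_op_compl (dualE _ (fsubset_refl X)) (ext_so_comp _ _ sVX).
rewrite !op_tr_ext_op_same => gap; rewrite -subr_ge0 in gap.
rewrite -subr_ge0; apply: le_trans gap _.
by rewrite le_eqVlt; apply/orP; left; apply/eqP; ring.
Qed.

Lemma refine_totP E F : DProg E -> DProg F -> refine_tot E F <-> so_le E F.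
Proof.
by move=> dE [linF _ _]; split; [exact: so_le_of_refine_tot | exact: refine_tot_of_so_le].
Qed.

Lemma refine_parP E F : DProg E -> DProg F -> refine_par E F <-> so_le F E.
Proof.
by move=> dE [linF _ _]; split; [exact: so_le_of_refine_par | exact: refine_par_of_so_le].
Qed.

(* Pairing with the rank-one operators [y^* y^T] recovers every value of the
   quadratic form of the coefficient matrix [i j |-> (E - F)(|i><j|) a b]. *)
Lemma linear_so_eq E F : so_linear E -> so_linear F ->
  (forall rho, positive rho -> E rho = F rho) -> E = F.
Proof.
move=> linE linF EF; apply/funext => rho; apply/funeq2P => a b.
rewrite (linear_so_expand linE) (linear_so_expand linF).
apply: eq_bigr => i _; apply: eq_bigr => j _; congr (_ * _).
apply/subr0_eq.
apply: (eq0_of_qform_eq0 (A := fun i j => E (unit_op i j) a b - F (unit_op i j) a b)) => y.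
pose B : Op R V := fun p q => (y p)^* * y q.
have pB : positive B by apply: eq_psd (psd_rank1 (fun p => (y p)^*)) => p q; rewrite conjCK.
have /(congr1 (fun A => A a b)) /eqP := EF B pB.
rewrite (linear_so_expand linE) (linear_so_expand linF) -subr_eq0 -sumrB => /eqP <-.
by apply: eq_bigr => p _; rewrite -sumrB; apply: eq_bigr => q _; rewrite /B; ring.
Qed.

Lemma so_le_refl E : so_le E E.
Proof.
move=> X _ rho _; rewrite (_ : op_sub _ _ = fun _ _ => 0); first exact: psd0.
by apply/funeq2P => a b; rewrite /op_sub subrr.
Qed.

Lemma so_le_anti E F : so_linear E -> so_linear F -> so_le E F -> so_le F E -> E = F.
Proof.
move=> linE linF leEF leFE; apply: linear_so_eq => // rho prho.
have := leEF V (fsubset_refl V) rho prho; have := leFE V (fsubset_refl V) rho prho.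
rewrite !ext_so_same => pEF pFE.
apply/esym/(eq_op_of_psd_sub pFE)/le_anti.
by have := ftr_psd_ge0 pFE; have := ftr_psd_ge0 pEF; rewrite /op_sub !ftrB !subr_ge0 => -> ->.
Qed.

Lemma so_le_tp_eq E F : so_linear E -> so_linear F ->
  trace_preserving E -> trace_preserving F -> so_le E F -> E = F.
Proof.
move=> linE linF tpE tpF leEF; apply: linear_so_eq => // rho prho.
have := leEF V (fsubset_refl V) rho prho; rewrite !ext_so_same => pFE.
by apply/esym/(eq_op_of_psd_sub pFE); rewrite tpE tpF.
Qed.

End Refinement.

Theorem theorem4p2 (R : realType) (V : {fset nat}) (E F : SO R V) :
  DProg E -> DProg F ->
  [/\ (refine_tot E F <-> so_le E F),
      (refine_par E F <-> so_le F E),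
      (equiv_tot E F <-> equiv_par E F) /\ (equiv_par E F <-> E = F)
    & (trace_preserving E -> trace_preserving F ->
       (refine_tot E F <-> refine_par E F) /\ (refine_par E F <-> E = F))].
Proof.
move=> dE dF; have [linE _ _] := dE; have [linF _ _] := dF.
have totEF := refine_totP dE dF; have totFE := refine_totP dF dE.
have parEF := refine_parP dE dF; have parFE := refine_parP dF dE.
have equiv_par_eq : equiv_par E F <-> E = F.
  split=> [[/parEF leFE /parFE leEF] | <-]; first exact: so_le_anti.
  by split; apply/refine_par_of_so_le/so_le_refl.
split=> //; first by split=> //; rewrite /equiv_tot /equiv_par; tauto.
move=> tpE tpF.
have refine_par_eq : refine_par E F <-> E = F.
  split=> [/parEF leFE | <-]; last exact/refine_par_of_so_le/so_le_refl.
  by symmetry; exact: so_le_tp_eq linF linE tpF tpE leFE.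
split=> //; split=> [/totEF leEF | /refine_par_eq <-]; last exact/refine_tot_of_so_le/so_le_refl.
by apply/refine_par_eq; exact: so_le_tp_eq linE linF tpE tpF leEF.
Qed.
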